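(* Let $p\in(0,1)$ be fixed. With high probability, for every set $V\subset[n]$ of size at least $\frac{3}{p}\ln n$, the number of vertices of $[n]\setminus V$ having at most $\frac{1}{2}\ln n$ neighbours in $V$ in $G(n,p)$ is less than $\ln^3 n$.
   Context: $G(n,p)$ is the binomial random graph on $[n]$ with edge probability $p$; with high probability means with probability tending to $1$ as $n\to\infty$. *)

From HB Require Import structures.
From mathcomp Require Import all_boot all_order all_algebra.
From mathcomp Require Import all_classical all_reals all_analysis.
Set Implicit Arguments. Unset Strict Implicit. Unset Printing Implicit Defensive.
Import Order.TTheory GRing.Theory Num.Theory.
Local Open Scope ring_scope.

Definition pairs (n : nat) : {set {set 'I_n}} := [set e : {set 'I_n} | #|e| == 2%N].

Definition is_graph (n : nat) (G : {set {set 'I_n}}) : bool := G \subset pairs n.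

Definition adj (n : nat) (G : {set {set 'I_n}}) (x y : 'I_n) : bool :=
  [set x; y] \in G.

Definition gnp_weight (R : realType) (n : nat) (p : R) (G : {set {set 'I_n}}) : R :=
  p ^+ #|G| * (1 - p) ^+ (#|pairs n| - #|G|).

Definition gnp_prob (R : realType) (n : nat) (p : R)
    (P : {set {set 'I_n}} -> bool) : R :=
  \sum_(G in powerset (pairs n) | P G) gnp_weight p G.

Definition deg_in (n : nat) (G : {set {set 'I_n}}) (V : {set 'I_n}) (x : 'I_n) : nat :=
  #|[set y in V | adj G x y]|.

Definition claim8_event (R : realType) (n : nat) (p : R) (G : {set {set 'I_n}}) : bool :=
  [forall V : {set 'I_n},
     ((3 / p) * ln (n%:R : R) <= (#|V|%:R : R)) ==>
     ((#|[set x in ~: V | ((deg_in G V x)%:R : R) <= ln (n%:R : R) / 2]|%:R : R)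
        < ln (n%:R : R) ^+ 3)].

From HB Require Import structures.
From mathcomp Require Import all_boot all_order all_algebra.
From mathcomp Require Import all_classical all_reals all_analysis.
From mathcomp Require Import ring lra.
Set Implicit Arguments. Unset Strict Implicit. Unset Printing Implicit Defensive.
Import Order.TTheory GRing.Theory Num.Theory.
Local Open Scope ring_scope.

(* Exponential moment plus union bound.  Let L = ln n, k = floor (3 L / p) and
   s = floor (L^3).  If the event fails, there are disjoint V and U with
   |V| = k, |U| = s and every u in U having at most L/2 neighbours in V, so that
   prod_(u in U) n e^(-2 deg_V u) >= 1.  The k s edges between U and V are
   independent, so this product has mean n^s (1 - p + p e^-2)^(s k), which is at
   most n^s e^(-3 p s k / 4).  Summing over the at most n^k n^s pairs (V, U)
   bounds the failure probability by exp (k L + 2 s L - 3 p s k / 4) <= 1 / n. *)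

Lemma prodD_powerset (R : comNzRingType) (X : finType) (P : {set X}) (f g : X -> R) :
  \prod_(e in P) (f e + g e)
  = \sum_(J in powerset P) (\prod_(e in J) f e) * (\prod_(e in P :\: J) g e).
Proof.
rewrite big_mkcond /=.
rewrite (eq_bigr (fun e => (if e \in P then f e else 0) + (if e \in P then g e else 1)));
  last by move=> e _; case: ifP => _; rewrite ?add0r.
rewrite bigA_distr /= [RHS]big_mkcond /=; apply: eq_bigr => J _.
rewrite powersetE; have [JP | /fintype.subsetPn[e eJ eP]] := boolP (J \subset P); last first.
  by rewrite (bigD1 e) //= eJ (negbTE eP) mul0r.
rewrite (bigID (mem J)) /=; congr (_ * _).
  by apply: eq_bigr => e eJ; rewrite eJ (fintype.subsetP JP e eJ).
rewrite [RHS]big_mkcond [LHS]big_mkcond /=; apply: eq_bigr => e _.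
by rewrite inE; case: (e \in J).
Qed.

Lemma ler_sum_term (R : numDomainType) (I : finType) (A : pred I) (F : I -> R) i :
  i \in A -> (forall j, A j -> 0 <= F j) -> F i <= \sum_(j in A) F j.
Proof.
move=> iA F0; rewrite (bigD1 i) //= lerDl sumr_ge0 // => j /andP[jA _]; exact: F0.
Qed.

Section RandomGraph.
Variables (R : realType) (n : nat) (p : R).
Implicit Types (G : {set {set 'I_n}}) (P : {set {set 'I_n}} -> bool).

Definition gnp_mean (f : {set {set 'I_n}} -> R) : R :=
  \sum_(G in powerset (pairs n)) gnp_weight p G * f G.

Lemma gnp_mean_prod_edges (h : {set 'I_n} -> R) :
  gnp_mean (fun G => \prod_(e in G) h e) = \prod_(e in pairs n) (p * h e + (1 - p)).
Proof.
rewrite prodD_powerset; apply: eq_bigr => G; rewrite powersetE => GP.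
rewrite /gnp_weight big_split /= !prodr_const.
by rewrite cardsD (finset.setIidPr GP) mulrAC.
Qed.

Lemma gnp_mean1 : gnp_mean (fun _ => 1) = 1.
Proof.
have := gnp_mean_prod_edges (fun _ => 1).
rewrite big1 => [E|e _]; last by rewrite mulr1 addrC subrK.
by rewrite -[RHS]E; apply: eq_bigr => G _; rewrite big1.
Qed.

Lemma gnp_mean_sum (I : finType) (A : pred I) (F : I -> {set {set 'I_n}} -> R) :
  gnp_mean (fun G => \sum_(i in A) F i G) = \sum_(i in A) gnp_mean (F i).
Proof.
by rewrite /gnp_mean exchange_big /=; apply: eq_bigr => G _; rewrite mulr_sumr.
Qed.

Lemma gnp_meanZ (c : R) (f : {set {set 'I_n}} -> R) :
  gnp_mean (fun G => c * f G) = c * gnp_mean f.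
Proof. by rewrite /gnp_mean mulr_sumr; apply: eq_bigr => G _; rewrite mulrCA. Qed.

Lemma gnp_prob_compl P : gnp_prob p P + gnp_prob p (predC P) = 1.
Proof.
rewrite -gnp_mean1 /gnp_mean (bigID P) /=.
by congr (_ + _); apply: eq_bigr => G _; rewrite mulr1.
Qed.

Hypotheses (p_ge0 : 0 <= p) (p_le1 : p <= 1).

Lemma gnp_weight_ge0 G : 0 <= gnp_weight p G.
Proof. by rewrite mulr_ge0 // exprn_ge0 // subr_ge0. Qed.

Lemma gnp_prob_ge0 P : 0 <= gnp_prob p P.
Proof. by apply: sumr_ge0 => G _; exact: gnp_weight_ge0. Qed.

Lemma gnp_prob_le1 P : gnp_prob p P <= 1.
Proof. by rewrite -(gnp_prob_compl P) lerDl gnp_prob_ge0. Qed.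

Lemma gnp_prob_le_mean P (f : {set {set 'I_n}} -> R) :
  (forall G, 0 <= f G) -> (forall G, P G -> 1 <= f G) -> gnp_prob p P <= gnp_mean f.
Proof.
move=> f_ge0 f_ge1; rewrite /gnp_prob big_mkcondr /=; apply: ler_sum => G _.
case: ifP => PG; last by rewrite mulr_ge0 ?gnp_weight_ge0.
by rewrite ler_peMr ?gnp_weight_ge0 ?f_ge1.
Qed.

End RandomGraph.

Section CrossEdges.
Variable n : nat.
Implicit Types (U V : {set 'I_n}) (G : {set {set 'I_n}}).

Definition cross_edges U V : {set {set 'I_n}} :=
  [set [set x.1; x.2] | x in finset.setX U V].

Lemma cross_edges_inj U V : [disjoint U & V] ->
  {in finset.setX U V &, injective (fun x : 'I_n * 'I_n => [set x.1; x.2])}.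
Proof.
move=> dUV [u v] [u' v']; rewrite !finset.in_setX => /andP[uU vV] /andP[u'U v'V] /= E.
have : u \in [set u'; v'] by rewrite -E set21.
rewrite !inE => /orP[/eqP eu | /eqP uv']; last first.
  by move: (disjointFr dUV uU); rewrite uv' v'V.
have : v \in [set u'; v'] by rewrite -E set22.
rewrite !inE => /orP[/eqP vu' | /eqP ev]; last by rewrite eu ev.
by move: (disjointFr dUV u'U); rewrite -vu' vV.
Qed.

Lemma cross_edges_sub U V : [disjoint U & V] -> cross_edges U V \subset pairs n.
Proof.
move=> dUV; apply/fintype.subsetP => e /imsetP[[u v]] /=.
rewrite finset.in_setX => /andP[uU vV] ->; rewrite inE cards2.
have -> // : u != v by apply/eqP => uv; move: (disjointFr dUV uU); rewrite uv vV.
Qed.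

Lemma card_cross_edges U V : [disjoint U & V] -> #|cross_edges U V| = (#|U| * #|V|)%N.
Proof. by move=> dUV; rewrite card_in_imset ?cardsX //; exact: cross_edges_inj. Qed.

Lemma prod_expr_deg_in (R : comNzRingType) (a : R) G U V : [disjoint U & V] ->
  \prod_(u in U) a ^+ deg_in G V u
  = \prod_(e in G) (if e \in cross_edges U V then a else 1).
Proof.
move=> dUV.
transitivity (\prod_(u in U) \prod_(v in V) (if [set u; v] \in G then a else 1)).
  apply: eq_bigr => u _; rewrite /deg_in -prodr_const big_mkcond [RHS]big_mkcond /=.
  by apply: eq_bigr => v _; rewrite inE /adj; case: (v \in V); case: ([set u; v] \in G).
rewrite pair_big /=.
transitivity (\prod_(x in finset.setX U V) (if [set x.1; x.2] \in G then a else 1)).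
  by apply: eq_bigl => -[u v]; rewrite finset.in_setX.
rewrite -(big_imset (fun e => if e \in G then a else 1) (cross_edges_inj dUV)) /=.
rewrite big_mkcond [RHS]big_mkcond /=; apply: eq_bigr => e _.
by case: (e \in G); case: (e \in cross_edges U V).
Qed.

Lemma gnp_mean_prod_deg_in (R : realType) (p a : R) U V : [disjoint U & V] ->
  gnp_mean p (fun G => \prod_(u in U) a ^+ deg_in G V u)
  = (p * a + (1 - p)) ^+ (#|U| * #|V|).
Proof.
move=> dUV.
rewrite (funext (fun G => prod_expr_deg_in a G dUV)) gnp_mean_prod_edges.
rewrite (big_setID (cross_edges U V)) /= (finset.setIidPr (cross_edges_sub dUV)).
rewrite [X in _ * X]big1 => [|e]; last first.
  by rewrite inE => /andP[/negbTE -> _]; rewrite mulr1 addrC subrK.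
rewrite mulr1 -(card_cross_edges dUV) -prodr_const.
by apply: eq_bigr => e ->.
Qed.

End CrossEdges.

Lemma exists_subset_card (T : finType) (A : {set T}) k : (k <= #|A|)%N ->
  exists2 B : {set T}, B \subset A & #|B| = k.
Proof.
move=> kA; exists [set x in take k (enum A)].
  by apply/fintype.subsetP => x; rewrite inE => /mem_take; rewrite mem_enum.
rewrite cardsE; move/card_uniqP: (take_uniq k (enum_uniq (mem A))) => ->.
by rewrite size_takel // -cardE.
Qed.

Definition low_deg (R : realType) n (G : {set {set 'I_n}}) (V : {set 'I_n}) (d : R) :=
  [set x in ~: V | (deg_in G V x)%:R <= d].

Section LowDegreeWitness.
Variables (R : realType) (n : nat) (p : R) (k s : nat) (a c : R).
Hypotheses (a_ge0 : 0 <= a) (c_ge0 : 0 <= c).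

(* An exponential-moment union bound over the pairs (V, U): a pair witnessing
   the failure of the event contributes a term at least 1. *)
Definition low_deg_witness (G : {set {set 'I_n}}) : R :=
  \sum_(V in [set V : {set 'I_n} | #|V| == k])
    \sum_(U in [set U : {set 'I_n} | #|U| == s] :&: powerset (~: V))
      \prod_(u in U) (c * a ^+ deg_in G V u).

Lemma low_deg_witness_ge0 (G : {set {set 'I_n}}) : 0 <= low_deg_witness G.
Proof.
do 2![apply: sumr_ge0 => ? _]; apply: prodr_ge0 => u _.
by rewrite mulr_ge0 ?exprn_ge0.
Qed.

Lemma low_deg_witness_ge1 (d : R) (G : {set {set 'I_n}}) (V : {set 'I_n}) :
  (forall j : nat, j%:R <= d -> 1 <= c * a ^+ j) ->
  (k <= #|V|)%N -> (s <= #|low_deg G V d|)%N -> 1 <= low_deg_witness G.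
Proof.
move=> factor_ge1 kV sB.
have [V0 V0V cV0] := exists_subset_card kV.
have [U0 U0B cU0] := exists_subset_card sB.
have U0V0 : U0 \in powerset (~: V0).
  rewrite powersetE; apply/fintype.subsetP => x /(fintype.subsetP U0B).
  rewrite !inE => /andP[xV _]; apply: contra xV; exact: (fintype.subsetP V0V).
have inner_ge0 V' U : 0 <= \prod_(u in U) (c * a ^+ deg_in G V' u).
  by apply: prodr_ge0 => u _; rewrite mulr_ge0 ?exprn_ge0.
apply: le_trans (ler_sum_term (i := V0) _ _); last 2 first.
- by rewrite inE cV0.
- by move=> V' _; apply: sumr_ge0 => U _; exact: inner_ge0.
apply: le_trans (ler_sum_term (i := U0) _ _); last 2 first.
- by rewrite finset.in_setI U0V0 inE cU0 eqxx.
- by move=> U _; exact: inner_ge0.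
apply: (big_ind (fun x => 1 <= x)) => //; first exact: mulr_ege1.
move=> u /(fintype.subsetP U0B); rewrite inE => /andP[_ hu].
apply: factor_ge1; apply: le_trans hu; rewrite ler_nat; apply: subset_leq_card.
apply/fintype.subsetP => y; rewrite !inE => /andP[yV0 ->].
by rewrite (fintype.subsetP V0V y yV0).
Qed.

Lemma gnp_mean_low_deg_witness : 0 <= p -> p <= 1 ->
  gnp_mean p low_deg_witness
  <= ('C(n, k) * 'C(n, s))%:R * (c ^+ s * (p * a + (1 - p)) ^+ (s * k)).
Proof.
move=> p_ge0 p_le1; set x := c ^+ s * _.
have x_ge0 : 0 <= x.
  by rewrite mulr_ge0 ?exprn_ge0 // addr_ge0 ?mulr_ge0 // subr_ge0.
have -> : ('C(n, k) * 'C(n, s))%:R * x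
    = \sum_(V in [set V : {set 'I_n} | #|V| == k]) x *+ 'C(n, s).
  by rewrite sumr_const card_draws card_ord -mulrnA mulr_natl mulnC.
rewrite gnp_mean_sum; apply: ler_sum => V; rewrite inE => /eqP cV.
rewrite gnp_mean_sum -[in leRHS](card_ord n) -card_draws.
apply: le_trans (_ : \sum_(U in [set U : {set 'I_n} | #|U| == s] :&: powerset (~: V)) x <= _).
  apply: ler_sum => U; rewrite finset.in_setI powersetCE inE => /andP[/eqP cU dUV].
  rewrite (funext (fun G => big_split _ _ _ _ _)) /= prodr_const gnp_meanZ.
  by rewrite gnp_mean_prod_deg_in // cU cV.
by rewrite sumr_const ler_wpMn2l // subset_leq_card // subsetIl.
Qed.

End LowDegreeWitness.

Lemma bin_le_expn n m : ('C(n, m) <= n ^ m)%N.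
Proof.
apply: (@leq_trans ('C(n, m) * m`!)); first by rewrite leq_pmulr ?fact_gt0.
rewrite bin_ffact ffact_prod -(card_ord m) -prod_nat_const card_ord.
by apply: leq_prod => i _; rewrite leq_subr.
Qed.

Lemma expR_neg2_le (R : realType) : expR (-2 : R) <= 4^-1.
Proof.
have e_ge2 : 1 + 1 <= expR (1 : R) by exact: expR_ge1Dx.
have e2_ge4 : 4 <= expR (2 : R) by rewrite -[2]/(1 + 1) expRD; nra.
by rewrite expRN lef_pV2 ?posrE ?expR_gt0.
Qed.

Lemma edge_factor_le_expR (R : realType) (p : R) : 0 <= p ->
  p * expR (-2) + (1 - p) <= expR (- (3 / 4 * p)).
Proof.
move=> p_ge0; apply: le_trans (expR_ge1Dx _).
have : p * expR (-2) <= p * 4^-1 by rewrite ler_wpM2l // expR_neg2_le.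
lra.
Qed.

(* The choice 24 / p + 9 makes S >= 8 (K + 1), which absorbs the K L + L term. *)
Lemma low_deg_exponent_le (R : realFieldType) (p L K S : R) :
  0 < p -> p < 1 -> 24 / p + 9 <= L ->
  K <= 3 / p * L < K + 1 -> 0 <= S -> S <= L ^+ 3 < S + 1 ->
  K * L + 2 * (S * L) - 3 / 4 * p * (S * K) <= - L.
Proof.
move=> p_gt0 p_lt1 hL /andP[Kx xK] S_ge0 /andP[SL LS].
have pinv : p / p = 1 by rewrite divff // gt_eqF.
have y_ge0 : 0 <= 24 / p by rewrite divr_ge0 // ltW.
have L_ge9 : 9 <= L by lra.
have pK : 3 * L - p < p * K.
  have : p * (3 / p * L) < p * (K + 1) by rewrite ltr_pM2l.
  by rewrite mulrA mulrCA pinv mulr1; lra.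
have SK : 9 / 4 * (S * L) - S <= 3 / 4 * p * (S * K).
  have : 0 <= S * (p * K - (3 * L - p)) by apply: mulr_ge0 => //; lra.
  have : 0 <= S * (1 - p) by apply: mulr_ge0 => //; lra.
  lra.
have SK8 : 8 * K + 8 <= S.
  have Kx8 : 8 * K <= 24 / p * L.
    by rewrite (_ : 24 / p * L = 8 * (3 / p * L)); [lra | field; rewrite gt_eqF].
  have e1 : 0 <= L * (L - 24 / p - 9) by apply: mulr_ge0 => //; lra.
  have e2 : 0 <= L ^+ 2 * (L - 1) by apply: mulr_ge0; [apply: exprn_ge0 | ]; lra.
  have : L ^+ 3 = L ^+ 2 * L by rewrite exprSr.
  have : L ^+ 2 = L * L by rewrite expr2.
  nra.
have KL : K * L + L <= S * L / 8.
  have : 0 <= L * (S - 8 * K - 8) by apply: mulr_ge0 => //; lra.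
  lra.
have : 0 <= S * (L - 8) by apply: mulr_ge0 => //; lra.
lra.
Qed.

Lemma expR_ln_natr (R : realType) n : 0 < ln (n%:R : R) -> expR (ln (n%:R : R)) = n%:R.
Proof.
move=> ln_gt0; rewrite lnK // posrE ltr0n lt0n.
by apply: contraTN ln_gt0 => /eqP ->; rewrite -leNgt ln_le0.
Qed.

Lemma union_bound_le_inv (R : realType) (p : R) n (k s : nat) :
  0 < p -> p < 1 -> 24 / p + 9 <= ln (n%:R : R) ->
  k%:R <= 3 / p * ln (n%:R : R) < k.+1%:R -> s%:R <= ln (n%:R : R) ^+ 3 < s.+1%:R ->
  ('C(n, k) * 'C(n, s))%:R * (n%:R ^+ s * (p * expR (-2) + (1 - p)) ^+ (s * k))
  <= (n%:R : R)^-1.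
Proof.
set L := ln _; rewrite -[k.+1%:R]natr1 -[s.+1%:R]natr1 => p_gt0 p_lt1 hL hk hs.
have nE : (n%:R : R) = expR L.
  by rewrite expR_ln_natr // /L; apply: lt_le_trans hL; rewrite ltr_wpDl // divr_ge0 // ltW.
have q_ge0 : 0 <= p * expR (-2) + (1 - p).
  by rewrite addr_ge0 ?mulr_ge0 ?expR_ge0 ?subr_ge0 // ltW.
have binom_le : (('C(n, k) * 'C(n, s))%:R : R) <= n%:R ^+ k * n%:R ^+ s.
  by rewrite -!natrX -natrM ler_nat leq_mul // bin_le_expn.
have key := low_deg_exponent_le p_gt0 p_lt1 hL hk (ler0n _ s) hs.
apply: le_trans (_ : (n%:R ^+ k * n%:R ^+ s) *
    (n%:R ^+ s * expR (- (3 / 4 * p)) ^+ (s * k)) <= _).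
  apply: ler_pM; rewrite ?mulr_ge0 ?exprn_ge0 //.
  apply: ler_pM; rewrite ?exprn_ge0 //.
  by apply: lerXn2r; rewrite ?nnegrE ?expR_ge0 // edge_factor_le_expR // ltW.
by rewrite nE -!expRM_natl -!expRD -expRN ler_expR natrM; lra.
Qed.

Lemma claim8_failure_prob_le (R : realType) (p : R) n :
  0 < p -> p < 1 -> 24 / p + 9 <= ln (n%:R : R) ->
  gnp_prob p (predC (claim8_event p (n := n))) <= (n%:R : R)^-1.
Proof.
set L := ln _ => p_gt0 p_lt1 hL.
have L_gt0 : 0 < L by apply: lt_le_trans hL; rewrite ltr_wpDl // divr_ge0 // ltW.
have x_ge0 : 0 <= 3 / p * L by rewrite mulr_ge0 ?divr_ge0 // ltW.
have L3_ge0 : 0 <= L ^+ 3 by rewrite exprn_ge0 // ltW.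
apply: le_trans (union_bound_le_inv p_gt0 p_lt1 hL (truncn_itv x_ge0) (truncn_itv L3_ge0)).
apply: le_trans (gnp_mean_low_deg_witness _ _ _ (expR_ge0 _) (ler0n _ n) (ltW p_gt0) (ltW p_lt1)).
apply: (gnp_prob_le_mean (ltW p_gt0) (ltW p_lt1)) => G.
  exact: low_deg_witness_ge0 (expR_ge0 _) (ler0n _ n) G.
move=> /forallPn[V]; rewrite negb_imply -leNgt => /andP[hV hB].
apply: (@low_deg_witness_ge1 _ _ _ _ _ _ (expR_ge0 _) (ler0n _ n) (L / 2) G V).
- move=> j hj; rewrite -expRM_natl -(expR_ln_natr L_gt0) -expRD -[leLHS]expR0 ler_expR.
  by rewrite -/L; lra.
- by rewrite -(ler_nat R); apply: le_trans hV; rewrite truncn_le.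
- by rewrite -(ler_nat R); apply: le_trans hB; rewrite truncn_le.
Qed.

Import numFieldNormedType.Exports.
Local Open Scope classical_set_scope.

Theorem claim8 (R : realType) (p : R) (hp0 : 0 < p) (hp1 : p < 1) :
  (fun n : nat => gnp_prob p (claim8_event p (n := n))) @ \oo --> (1 : R).
Proof.
have inv_cvg0 : (fun n : nat => (n%:R : R)^-1) @ \oo --> 0.
  apply/gtr0_cvgV0; last exact: cvgr_idn.
  by near=> n; rewrite ltr0n; near: n; exact: nbhs_infty_gt.
apply: (@squeeze_cvgr _ _ _ _ (fun n => 1 - n%:R^-1) (fun=> 1)); last 2 first.
- by rewrite -[X in _ --> X]subr0; apply: cvgB => //; exact: cvg_cst.
- exact: cvg_cst.
have /cvgryPge/(_ (expR (24 / p + 9))) n_large := @cvgr_idn R.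
near=> n; have n_ge : expR (24 / p + 9) <= n%:R by near: n.
have hL : 24 / p + 9 <= ln (n%:R : R).
  by rewrite -ler_expR lnK // posrE (lt_le_trans (expR_gt0 _) n_ge).
apply/andP; split; last exact: gnp_prob_le1 (ltW hp0) (ltW hp1) _.
rewrite lerBlDr -lerBlDl.
(* only this [1]: [n%:R] is also [1 *+ n] *)
rewrite -[in X in X - _](gnp_prob_compl p (claim8_event p (n := n))).
by rewrite addrAC subrr add0r claim8_failure_prob_le.
Unshelve. all: by end_near.
Qed.
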